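(* Let $n\in\mathbb{N}$, let $A$ be a $2n$-adically closed integral domain, and let $p,q$ be prime ideals of $A$. Regard the localizations $A_p$ and $A_q$ as subrings of $\mathrm{Frac}(A)$. Then the join $[A_p,A_q]$ is a local ring.
   Context: All rings are commutative with $1$. A ring $R$ is $k$-adically closed if every monic polynomial of degree $k$ with coefficients in $R$ has a root in $R$. For subrings $A,B$ of a ring $K$, the join $[A,B]$ is the smallest subring of $K$ containing both $A$ and $B$ (equivalently, the set of finite sums $\sum a_ib_i$ with $a_i\in A$, $b_i\in B$). *)

From HB Require Import structures.
From mathcomp Require Import all_boot all_order all_algebra.
Set Implicit Arguments. Unset Strict Implicit. Unset Printing Implicit Defensive.
Import Order.TTheory GRing.Theory Num.Theory.
Local Open Scope ring_scope.

Definition adically_closed (R : comNzRingType) (k : nat) : Prop :=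
  forall P : {poly R}, P \is monic -> size P = k.+1 -> exists x : R, root P x.

Definition is_ideal (R : comNzRingType) (I : R -> Prop) : Prop :=
  I 0 /\ (forall x y, I x -> I y -> I (x + y)) /\ (forall r x, I x -> I (r * x)).

Definition prime_ideal (R : comNzRingType) (I : R -> Prop) : Prop :=
  is_ideal I /\ ~ I 1 /\ (forall x y, I (x * y) -> I x \/ I y).

Definition tofracF (A : idomainType) (a : A) : {fraction A} := FracField.tofrac a.

Definition localization (A : idomainType) (p : A -> Prop) : {fraction A} -> Prop :=
  fun z => exists a s : A, ~ p s /\ z = tofracF a / tofracF s.

Definition is_subring (K : comNzRingType) (S : K -> Prop) : Prop :=
  S 1 /\ (forall x y, S x -> S y -> S (x - y)) /\ (forall x y, S x -> S y -> S (x * y)).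

Definition join (K : comNzRingType) (S T : K -> Prop) : K -> Prop :=
  fun z => forall U : K -> Prop, is_subring U ->
    (forall x, S x -> U x) -> (forall x, T x -> U x) -> U z.

Definition is_ideal_of (K : comNzRingType) (S I : K -> Prop) : Prop :=
  (forall x, I x -> S x) /\ I 0 /\ (forall x y, I x -> I y -> I (x + y)) /\
  (forall r x, S r -> I x -> I (r * x)).

Definition is_maximal_ideal_of (K : comNzRingType) (S M : K -> Prop) : Prop :=
  is_ideal_of S M /\ ~ M 1 /\
  (forall J, is_ideal_of S J -> ~ J 1 -> (forall x, M x -> J x) -> forall x, J x -> M x).

Definition is_local_subring (K : comNzRingType) (S : K -> Prop) : Prop :=
  exists M, is_maximal_ideal_of S M /\
    forall M', is_maximal_ideal_of S M' -> forall x, M' x <-> M x.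

From HB Require Import structures.
From mathcomp Require Import all_boot all_order all_algebra.
From mathcomp Require Import ring.
From Stdlib Require Import Classical FunctionalExtensionality PropExtensionality.
Set Implicit Arguments. Unset Strict Implicit.
Local Open Scope ring_scope.
Import GRing.Theory.

(* Write B = [A_p, A_q] and call an element of A a "pq-product" when it is
   s * t with s outside p and t outside q.
   1. B is exactly the set of fractions a / (s t) with s outside p and t
      outside q; such a fraction is a unit of B as soon as a is a pq-product.
   2. Since A is 2n-adically closed, every monic quadratic has a root in A
      (take a root of its n-th power); hence any c, d in A can be written as
      c = u + v, d = u v.
   3. Key dichotomy: for s outside p, t outside q and any a, one of a and
      s t - a is a pq-product.  The only hard case is a, s t - a both in p
      and q; then writing s + t = u + v, a = u v, a case analysis on which
      of u, v lies in p and q exhibits a or s t - a as a pq-product.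
   4. Hence for every z in B, z or 1 - z is a unit of B; a general criterion
      shows that such a subring is local, its maximal ideal being the set of
      its non-units. *)

Section PrimeIdeal.
Variables (R : comNzRingType) (P : R -> Prop).
Hypothesis hP : prime_ideal P.

Lemma prime_addr x y : P x -> P y -> P (x + y).
Proof. by case: hP => [[_ [hD _]] _]; apply: hD. Qed.

Lemma prime_mull r x : P x -> P (r * x).
Proof. by case: hP => [[_ [_ hM]] _]; apply: hM. Qed.

Lemma prime_subr x y : P x -> P y -> P (x - y).
Proof.
by move=> hx hy; rewrite -mulN1r; apply: prime_addr => //; apply: prime_mull.
Qed.

Lemma prime_not1 : ~ P 1.
Proof. by case: hP => _ []. Qed.

Lemma prime_mul_cases x y : P (x * y) -> P x \/ P y.
Proof. by case: hP => _ [_ hprime]; apply: hprime. Qed.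

Lemma prime_not_mul x y : ~ P x -> ~ P y -> ~ P (x * y).
Proof. by move=> hx hy /prime_mul_cases []. Qed.

Lemma prime_not_neq0 x : ~ P x -> x != 0.
Proof. by case: hP => [[h0 _] _] hx; apply: contra_notN hx => /eqP ->. Qed.

Lemma prime_addr_cancel x y : P (x + y) -> P y -> P x.
Proof. by move=> hxy hy; rewrite -(addrK y x); apply: prime_subr. Qed.

End PrimeIdeal.

Section Subring.
Variables (K : comNzRingType) (S : K -> Prop).
Hypothesis hS : is_subring S.

Lemma subring0 : S 0.
Proof. by case: hS => h1 [hB _]; rewrite -(subrr 1); apply: hB. Qed.

Lemma subringD x y : S x -> S y -> S (x + y).
Proof.
case: hS => _ [hB _] hx hy; rewrite -[y]opprK -[- y]add0r.
by apply: (hB) => //; apply: (hB) => //; apply: subring0.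
Qed.

Lemma subringM x y : S x -> S y -> S (x * y).
Proof. by case: hS => _ [_ hM]; apply: hM. Qed.

Definition unit_of_subring (z : K) : Prop := exists y, S y /\ z * y = 1.

Definition nonunits_of_subring (z : K) : Prop := S z /\ ~ unit_of_subring z.

Lemma proper_ideal_nonunits J :
  is_ideal_of S J -> ~ J 1 -> forall x, J x -> nonunits_of_subring x.
Proof.
move=> [hJS [_ [_ hJM]]] hJ1 x hx; split; first exact: hJS.
by move=> [y [hy hxy]]; apply: hJ1; rewrite -hxy mulrC; apply: hJM.
Qed.

(* Locality criterion: if for every z in S one of z, 1 - z is a unit of S,
   then the non-units form an ideal, which is then the unique maximal one. *)
Hypothesis unit_or_unit_compl :
  forall z, S z -> unit_of_subring z \/ unit_of_subring (1 - z).

Lemma nonunits_ideal : is_ideal_of S nonunits_of_subring.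
Proof.
split; first by move=> x [].
split.
  split; first exact: subring0.
  by move=> [y [_]]; rewrite mul0r => /eqP; rewrite eq_sym oner_eq0.
split.
  move=> x y [Sx ux] [Sy uy]; split; first exact: subringD.
  move=> [w [Sw hw]].
  have [[v [Sv hv]]|[v [Sv hv]]] := unit_or_unit_compl (subringM Sx Sw).
    by apply: ux; exists (w * v); split; [exact: subringM | rewrite mulrA].
  apply: uy; exists (w * v); split; first exact: subringM.
  by rewrite -hv -[in RHS]hw; ring.
move=> r x Sr [Sx ux]; split; first exact: subringM.
move=> [w [Sw hw]]; apply: ux; exists (r * w); split; first exact: subringM.
by rewrite -hw; ring.
Qed.

Lemma local_of_unit_or_unit_compl : is_local_subring S.
Proof.
have not1 : ~ nonunits_of_subring 1.
  by move=> [_ []]; exists 1; split; [case: hS | rewrite mulr1].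
exists nonunits_of_subring; split.
  split; first exact: nonunits_ideal.
  split=> // J hJ hJ1 _; exact: proper_ideal_nonunits.
move=> M [hM [hM1 hmax]] x; split; first exact: proper_ideal_nonunits.
apply: hmax => //; first exact: nonunits_ideal.
exact: proper_ideal_nonunits hM hM1.
Qed.

End Subring.

(* In a 2n-adically closed domain every monic quadratic X^2 - c X + d has a
   root u, so that c and d are the sum and product of u and c - u. *)
Lemma sum_product_decomposition (n : nat) (A : idomainType) :
  adically_closed A (2 * n) -> forall c d : A, exists u, u * (c - u) = d.
Proof.
move=> hA c d.
pose f : {poly A} := 'X^2 + ((- c) *: 'X + d%:P).
have size_lin : (size ((- c) *: 'X + d%:P)%R < size ('X^2 : {poly A}))%N.
  rewrite size_polyXn; apply: (leq_ltn_trans (size_polyD _ _)).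
  rewrite gtn_max (leq_ltn_trans (size_polyC_leq1 _)) // andbT.
  by apply: (leq_ltn_trans (size_scale_leq _ _)); rewrite size_polyX.
have f_monic : f \is monic by rewrite monicE /f lead_coefDl // lead_coefXn.
have size_fn : size (f ^+ n) = (2 * n).+1.
  have := size_exp f n; rewrite /f size_polyDl // size_polyXn /= mulnC => <-.
  by rewrite prednK // size_poly_gt0 monic_neq0 // monic_exp.
have [x] := hA (f ^+ n) (monic_exp n f_monic) size_fn.
rewrite /root horner_exp expf_eq0 => /andP [_ /eqP].
rewrite /f !hornerE => fx0; exists x.
have quad : x ^+ 2 - c * x + d = 0 by rewrite -mulNr; exact: fx0.
by apply/eqP; rewrite -subr_eq0 -oppr_eq0 -quad; apply/eqP; ring.
Qed.

Section KeyDichotomy.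
Variables (A : idomainType) (p q : A -> Prop).
Hypotheses (hp : prime_ideal p) (hq : prime_ideal q).

Definition pq_product (a : A) : Prop :=
  exists s t, ~ p s /\ ~ q t /\ a = s * t.

Lemma pq_product_outside_p a : ~ p a -> pq_product a.
Proof. by exists a, 1; split; [|split; [apply: prime_not1 | rewrite mulr1]]. Qed.

Lemma pq_product_outside_q a : ~ q a -> pq_product a.
Proof. by exists 1, a; split; [apply: prime_not1 | rewrite mul1r]. Qed.

Variables (s t : A).
Hypotheses (hs : ~ p s) (ht : ~ q t).

(* The hard case of the dichotomy: a and s t - a lie in p and in q, so
   t is in p and s in q.  Given u + v = s + t, u v = a with u in p, either
   u is in q and s t - a = (s - u)(t - u), or v is in q and a = v u. *)
Lemma dichotomy_from_factorisation a u v :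
  p t -> q s -> q a -> u + v = s + t -> u * v = a -> p u ->
  pq_product a \/ pq_product (s * t - a).
Proof.
move=> pt qs qa huv uva pu; rewrite -uva in qa *.
have npv : ~ p v.
  move=> pv; apply: hs; apply: (prime_addr_cancel hp (y := t)) => //.
  by rewrite -huv; apply: prime_addr.
have [qu | qv] := prime_mul_cases hq qa.
  right; exists (s - u), (t - u); split.
    by move=> h; apply: hs; rewrite -(subrK u s); apply: prime_addr.
  split; first by move=> h; apply: ht; rewrite -(subrK u t); apply: prime_addr.
  by rewrite (_ : v = s + t - u); [ring | rewrite -huv; ring].
left; exists v, u; split=> //; split; last by rewrite mulrC.
move=> h; apply: ht; apply: (prime_addr_cancel hq (y := s)) => //.
by rewrite addrC -huv; apply: prime_addr.
Qed.

End KeyDichotomy.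

Lemma pq_product_dichotomy (n : nat) (A : idomainType) (p q : A -> Prop) :
  adically_closed A (2 * n) -> prime_ideal p -> prime_ideal q ->
  forall a s t, ~ p s -> ~ q t -> pq_product p q a \/ pq_product p q (s * t - a).
Proof.
move=> hA hp hq a s t hs ht.
case: (classic (p a)) => pa; last by left; apply: pq_product_outside_p.
case: (classic (q a)) => qa; last by left; apply: pq_product_outside_q.
case: (classic (p (s * t - a))) => pb; last by right; apply: pq_product_outside_p.
case: (classic (q (s * t - a))) => qb; last by right; apply: pq_product_outside_q.
have pt : p t.
  have : p (s * t) by rewrite -(subrK a (s * t)); apply: prime_addr.
  by case/(prime_mul_cases hp).
have qs : q s.
  have : q (s * t) by rewrite -(subrK a (s * t)); apply: prime_addr.
  by case/(prime_mul_cases hq).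
have [u huv] := sum_product_decomposition hA (s + t) a.
have hsum : u + (s + t - u) = s + t by ring.
have [pu | pv] : p u \/ p (s + t - u) by apply: (prime_mul_cases hp); rewrite huv.
  exact: dichotomy_from_factorisation qa hsum huv pu.
apply: (dichotomy_from_factorisation hp hq hs ht pt qs qa (v := u) _ _ pv).
  by rewrite addrC.
by rewrite mulrC.
Qed.

Section FractionArithmetic.
Variables (F : fieldType) (s t : F).
Hypotheses (s_neq0 : s != 0) (t_neq0 : t != 0).

Lemma fraction_subl (a : F) : 1 - a / (s * t) = (s * t - a) / (s * t).
Proof. by field; rewrite s_neq0 t_neq0. Qed.

Variables (s' t' : F).
Hypotheses (s'_neq0 : s' != 0) (t'_neq0 : t' != 0).

Lemma fraction_subr (a a' : F) :
  a / (s * t) - a' / (s' * t') = (a * s' * t' - a' * s * t) / (s * s' * (t * t')).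
Proof. by field; rewrite s_neq0 t_neq0 s'_neq0 t'_neq0. Qed.

Lemma fraction_mulr (a a' : F) :
  a / (s * t) * (a' / (s' * t')) = (a * a') / (s * s' * (t * t')).
Proof. by field; rewrite s_neq0 t_neq0 s'_neq0 t'_neq0. Qed.

Lemma fraction_mulV : (s' * t') / (s * t) * ((s * t) / (s' * t')) = 1.
Proof. by field; rewrite s_neq0 t_neq0 s'_neq0 t'_neq0. Qed.

End FractionArithmetic.

Section JoinOfLocalizations.
Variables (A : idomainType) (p q : A -> Prop).
Hypotheses (hp : prime_ideal p) (hq : prime_ideal q).

Local Notation "x %:F" := (tofracF x).

Definition pq_fraction (z : {fraction A}) : Prop :=
  exists a s t, ~ p s /\ ~ q t /\ z = a%:F / (s%:F * t%:F).

Lemma tofrac_outside_neq0 (P : A -> Prop) s :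
  prime_ideal P -> ~ P s -> s%:F != 0.
Proof. by move=> hP hs; rewrite /tofracF tofrac_eq0; have := prime_not_neq0 hP hs. Qed.

Lemma pq_fraction_subring : is_subring pq_fraction.
Proof.
split; [|split].
- exists 1, 1, 1; split; first exact: prime_not1.
  by split; [exact: prime_not1 | rewrite /tofracF rmorph1 mulr1 divr1].
- move=> x y [a [s [t [hs [ht ->]]]]] [a' [s' [t' [hs' [ht' ->]]]]].
  exists (a * s' * t' - a' * s * t), (s * s'), (t * t').
  do 2 (split; first exact: prime_not_mul).
  rewrite /tofracF !rmorphB !rmorphM; apply: fraction_subr;
    by [apply: (tofrac_outside_neq0 hp) | apply: (tofrac_outside_neq0 hq)].
- move=> x y [a [s [t [hs [ht ->]]]]] [a' [s' [t' [hs' [ht' ->]]]]].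
  exists (a * a'), (s * s'), (t * t').
  do 2 (split; first exact: prime_not_mul).
  rewrite /tofracF !rmorphM; apply: fraction_mulr;
    by [apply: (tofrac_outside_neq0 hp) | apply: (tofrac_outside_neq0 hq)].
Qed.

(* [A_p, A_q] consists exactly of the fractions a / (s t), s outside p,
   t outside q: these contain both localizations, form a subring, and each
   is a product of an element of A_p and one of A_q. *)
Lemma join_localizations_pq_fraction :
  join (localization p) (localization q) = pq_fraction.
Proof.
apply: functional_extensionality => z; apply: propositional_extensionality.
split.
- apply; first exact: pq_fraction_subring.
  + move=> x [a [s [hs ->]]]; exists a, s, 1; split=> //; split; first exact: prime_not1.
    by rewrite /tofracF rmorph1 mulr1.
  + move=> x [a [s [hs ->]]]; exists a, 1, s; split; first exact: prime_not1.
    by split=> //; rewrite /tofracF rmorph1 mul1r.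
- move=> [a [s [t [hs [ht ->]]]]] U hU inUp inUq.
  rewrite invfM mulrA; apply: (subringM hU); first by apply: inUp; exists a, s.
  apply: inUq; exists 1, t; split=> //.
  by rewrite /tofracF rmorph1 div1r.
Qed.

Lemma pq_product_unit b s t : ~ p s -> ~ q t -> pq_product p q b ->
  unit_of_subring pq_fraction (b%:F / (s%:F * t%:F)).
Proof.
move=> hs ht [s' [t' [hs' [ht' ->]]]].
exists ((s * t)%:F / (s'%:F * t'%:F)); split; first by exists (s * t), s', t'.
rewrite /tofracF !rmorphM; apply: fraction_mulV;
  by [apply: (tofrac_outside_neq0 hp) | apply: (tofrac_outside_neq0 hq)].
Qed.

Lemma pq_fraction_unit_or_unit_compl (n : nat) :
  adically_closed A (2 * n) -> forall z, pq_fraction z ->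
  unit_of_subring pq_fraction z \/ unit_of_subring pq_fraction (1 - z).
Proof.
move=> hA z [a [s [t [hs [ht ->]]]]].
have [ha | hb] := pq_product_dichotomy hA hp hq a hs ht.
  by left; apply: pq_product_unit.
right; have -> : 1 - a%:F / (s%:F * t%:F) = (s * t - a)%:F / (s%:F * t%:F).
  rewrite /tofracF rmorphB rmorphM; apply: fraction_subl;
    by [apply: (tofrac_outside_neq0 hp) | apply: (tofrac_outside_neq0 hq)].
exact: pq_product_unit.
Qed.

End JoinOfLocalizations.

Theorem mainTheorem6 (n : nat) (A : idomainType) (p q : A -> Prop) :
  adically_closed A (2 * n) -> prime_ideal p -> prime_ideal q ->
  is_local_subring (join (localization p) (localization q)).
Proof.
move=> hA hp hq; rewrite join_localizations_pq_fraction //.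
apply: local_of_unit_or_unit_compl; first exact: pq_fraction_subring.
exact: pq_fraction_unit_or_unit_compl hA.
Qed.
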